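(* Let $X_1,X_2,\dots$ be i.i.d. integer-valued random variables. Then for every $n\ge1$, $$H_2\Big(\sum_{i=1}^n X_i\Big)\le H_2\Big(\sum_{i=1}^{n+1}X_i\Big).$$
   Context: For an integer-valued random variable $Z$, $H_2(Z)=-\log\sum_{z}\mathbf P\{Z=z\}^2$ is its Rényi entropy of order $2$ (collision entropy). *)

From Stdlib Require Import Reals ZArith.
Open Scope R_scope.

Definition Zsum_is (f : Z -> R) (l : R) : Prop :=
  exists a b : R,
    infinite_sum (fun n : nat => f (Z.of_nat n)) a /\
    infinite_sum (fun n : nat => f (- Z.of_nat (S n))%Z) b /\
    a + b = l.

Definition is_pmf (p : Z -> R) : Prop :=
  (forall z, 0 <= p z) /\ Zsum_is p 1.

(* law_of_sum p n q : q is the law of X_1 + ... + X_n where the X_i are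
   i.i.d. with common law p (n >= 1).  The law of a sum of independent
   integer-valued variables is the convolution of the laws:
   P(S_{n+1} = z) = sum_k P(S_n = k) P(X_{n+1} = z - k). *)
Inductive law_of_sum (p : Z -> R) : nat -> (Z -> R) -> Prop :=
| law_of_sum_one : law_of_sum p 1 p
| law_of_sum_succ : forall n q r,
    law_of_sum p n q ->
    (forall z, Zsum_is (fun k => q k * p (z - k)%Z) (r z)) ->
    law_of_sum p (S n) r.

(* Renyi entropy of order 2 of a law q: H_2 = h iff h = - log sum_z q(z)^2
   (natural logarithm; the base does not affect the inequality). *)
Definition H2_is (q : Z -> R) (h : R) : Prop :=
  exists s, Zsum_is (fun z => q z ^ 2) s /\ h = - ln s.

(* The collision entropy is -ln of the squared l2-norm of the law, so the claim is
   that convolving with p cannot increase this norm.  That is Young's inequality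
   ||q * p||_2 <= ||p||_1 ||q||_2: by Cauchy-Schwarz with weights p(z - k),
   (sum_k q(k) p(z - k))^2 <= ||p||_1 sum_k q(k)^2 p(z - k), and summing over z gives
   ||p||_1^2 ||q||_2^2.  Everything is first done on finite windows of Z and then
   passed to the limit. *)
From Stdlib Require Import Reals ZArith Lra Lia Classical FunctionalExtensionality.
Open Scope R_scope.

Fixpoint wsum (f : Z -> R) (c : Z) (n : nat) : R :=
  match n with
  | O => 0
  | S m => wsum f c m + f (c + Z.of_nat m)%Z
  end.

Lemma wsum1 f c : wsum f c 1 = f c.
Proof. simpl. rewrite Z.add_0_r. ring. Qed.

Lemma wsum_cat f c n m : wsum f c (n + m) = wsum f c n + wsum f (c + Z.of_nat n)%Z m.
Proof.
  induction m as [|m IH]; simpl.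
  - rewrite Nat.add_0_r; ring.
  - rewrite Nat.add_succ_r; simpl. rewrite IH.
    replace (c + Z.of_nat (n + m))%Z with (c + Z.of_nat n + Z.of_nat m)%Z by lia. ring.
Qed.

Lemma wsum_ext f g c n : (forall z, f z = g z) -> wsum f c n = wsum g c n.
Proof. intros H; induction n; simpl; [reflexivity | rewrite IHn, H; reflexivity]. Qed.

Lemma wsum_le f g c n : (forall z, f z <= g z) -> wsum f c n <= wsum g c n.
Proof. intros H; induction n; simpl; [lra | specialize (H (c + Z.of_nat n)%Z); lra]. Qed.

Lemma wsum_ge0 f c n : (forall z, 0 <= f z) -> 0 <= wsum f c n.
Proof. intros H; induction n; simpl; [lra | specialize (H (c + Z.of_nat n)%Z); lra]. Qed.

Lemma wsum_const0 c n : wsum (fun _ => 0) c n = 0.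
Proof. induction n; cbn [wsum]; [ring | rewrite IHn; ring]. Qed.

Lemma wsum_add f g c n : wsum (fun z => f z + g z) c n = wsum f c n + wsum g c n.
Proof. induction n; cbn [wsum]; [ring | rewrite IHn; ring]. Qed.

Lemma wsum_scal a f c n : wsum (fun z => a * f z) c n = a * wsum f c n.
Proof. induction n; cbn [wsum]; [ring | rewrite IHn; ring]. Qed.

Lemma wsum_swap (F : Z -> Z -> R) c n c' n' :
  wsum (fun z => wsum (fun k => F z k) c n) c' n' =
  wsum (fun k => wsum (fun z => F z k) c' n') c n.
Proof.
  induction n' as [|n' IH]; simpl.
  - symmetry; apply wsum_const0.
  - rewrite IH, <- wsum_add. reflexivity.
Qed.

Lemma wsum_shift f k c n : wsum (fun z => f (z - k)%Z) c n = wsum f (c - k)%Z n.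
Proof. induction n; simpl; [reflexivity | rewrite IHn; do 2 f_equal; lia]. Qed.

Lemma wsum_reflect f z c n :
  wsum (fun k => f (z - k)%Z) c n = wsum f (z - c - Z.of_nat n + 1)%Z n.
Proof.
  induction n as [|n IH]; [reflexivity |].
  change (wsum (fun k => f (z - k)%Z) c (S n))
    with (wsum (fun k => f (z - k)%Z) c n + f (z - (c + Z.of_nat n))%Z).
  rewrite IH, <- Nat.add_1_l, wsum_cat, wsum1.
  replace (z - c - Z.of_nat (1 + n) + 1 + Z.of_nat 1)%Z with (z - c - Z.of_nat n + 1)%Z by lia.
  replace (z - c - Z.of_nat (1 + n) + 1)%Z with (z - (c + Z.of_nat n))%Z by lia. ring.
Qed.

Lemma wsum_subwindow f c n c' n' : (forall z, 0 <= f z) -> (c' <= c)%Z ->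
  (c + Z.of_nat n <= c' + Z.of_nat n')%Z -> wsum f c n <= wsum f c' n'.
Proof.
  intros Hf Hc Hn.
  set (a := Z.to_nat (c - c')). set (b := (n' - a - n)%nat).
  replace n' with (a + (n + b))%nat by lia.
  rewrite wsum_cat, wsum_cat. replace (c' + Z.of_nat a)%Z with c by lia.
  pose proof (wsum_ge0 f c' a Hf). pose proof (wsum_ge0 f (c + Z.of_nat n) b Hf). lra.
Qed.

Lemma quadratic_ge0_discriminant (A B C : R) : 0 <= A ->
  (forall t, 0 <= A * t ^ 2 - 2 * B * t + C) -> B ^ 2 <= A * C.
Proof.
  intros [HA | <-] Hq.
  - specialize (Hq (B / A)).
    replace (A * (B / A) ^ 2 - 2 * B * (B / A) + C) with ((A * C - B ^ 2) / A) in Hq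
      by (field; lra).
    assert (Hprod : 0 <= (A * C - B ^ 2) / A * A) by (apply Rmult_le_pos; lra).
    replace ((A * C - B ^ 2) / A * A) with (A * C - B ^ 2) in Hprod by (field; lra). lra.
  - destruct (Req_dec B 0) as [-> | HB]; [lra |].
    specialize (Hq ((C + 1) / (2 * B))).
    replace (0 * ((C + 1) / (2 * B)) ^ 2 - 2 * B * ((C + 1) / (2 * B)) + C) with (-1) in Hq
      by (field; lra). lra.
Qed.

Lemma wsum_weighted_square_dev a b t c n :
  wsum (fun k => b k * (a k - t) ^ 2) c n =
  wsum b c n * t ^ 2 - 2 * wsum (fun k => a k * b k) c n * t
  + wsum (fun k => a k ^ 2 * b k) c n.
Proof. induction n; cbn [wsum]; [ring | rewrite IHn; ring]. Qed.

Lemma wsum_cauchy_schwarz a b c n : (forall z, 0 <= b z) ->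
  wsum (fun k => a k * b k) c n ^ 2 <= wsum b c n * wsum (fun k => a k ^ 2 * b k) c n.
Proof.
  intros Hb. apply quadratic_ge0_discriminant; [now apply wsum_ge0 |].
  intro t. rewrite <- wsum_weighted_square_dev.
  apply wsum_ge0; intro k. apply Rmult_le_pos; [apply Hb | apply pow2_ge_0].
Qed.

Definition sym_wsum (f : Z -> R) (M : nat) : R := wsum f (- Z.of_nat M)%Z (2 * M + 1).

Lemma Un_cv_const c : Un_cv (fun _ => c) c.
Proof. intros eps He. exists O; intros. unfold Rdist. rewrite Rminus_diag, Rabs_R0. lra. Qed.

Lemma wsum_from0_sum_f_R0 f M : wsum f 0 (S M) = sum_f_R0 (fun n => f (Z.of_nat n)) M.
Proof.
  induction M as [|M IH]; [simpl; ring |].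
  change (wsum f 0 (S (S M))) with (wsum f 0 (S M) + f (0 + Z.of_nat (S M))%Z).
  rewrite IH. reflexivity.
Qed.

Lemma wsum_neg_sum_f_R0 f M :
  wsum f (- Z.of_nat (S M))%Z (S M) = sum_f_R0 (fun n => f (- Z.of_nat (S n))%Z) M.
Proof.
  transitivity (wsum (fun k => f (-1 - k)%Z) 0 (S M)).
  - rewrite wsum_reflect. f_equal. lia.
  - rewrite wsum_from0_sum_f_R0. apply sum_eq; intros n _. f_equal. lia.
Qed.

Lemma Zsum_is_cv f l : Zsum_is f l -> Un_cv (sym_wsum f) l.
Proof.
  intros [a [b [Ha [Hb <-]]]].
  apply Un_cv_ext with (fun M => wsum f (- Z.of_nat M)%Z M + wsum f 0 (S M)).
  { intro M. unfold sym_wsum. replace (2 * M + 1)%nat with (M + S M)%nat by lia.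
    rewrite wsum_cat. do 2 f_equal. lia. }
  rewrite Rplus_comm. apply CV_plus.
  - apply CV_shift with 1%nat.
    apply Un_cv_ext with (sum_f_R0 (fun n => f (- Z.of_nat (S n))%Z)); [| exact Hb].
    intro n. rewrite Nat.add_1_r. symmetry; apply wsum_neg_sum_f_R0.
  - apply Un_cv_ext with (sum_f_R0 (fun n => f (Z.of_nat n))); [| exact Ha].
    intro n. symmetry; apply wsum_from0_sum_f_R0.
Qed.

Lemma Zsum_is_unique f l1 l2 : Zsum_is f l1 -> Zsum_is f l2 -> l1 = l2.
Proof. intros H1 H2. eapply UL_sequence; apply Zsum_is_cv; eauto. Qed.

Lemma wsum_le_Zsum f l c n : (forall z, 0 <= f z) -> Zsum_is f l -> wsum f c n <= l.
Proof.
  intros Hf Hl.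
  assert (Hgrow : Un_growing (sym_wsum f)).
  { intro M. apply wsum_subwindow; auto; lia. }
  apply Rle_trans with (sym_wsum f (Z.to_nat (Z.abs c) + n)).
  - apply wsum_subwindow; auto; lia.
  - exact (growing_ineq _ _ Hgrow (Zsum_is_cv f l Hl) _).
Qed.

Lemma Zsum_is_ge0 f l : (forall z, 0 <= f z) -> Zsum_is f l -> 0 <= l.
Proof. intros Hf Hl. exact (wsum_le_Zsum f l 0 0 Hf Hl). Qed.

Lemma Un_cv_le_const u l c : (forall n, u n <= c) -> Un_cv u l -> l <= c.
Proof. intros H Hu. exact (Rle_cv_lim H Hu (Un_cv_const c)). Qed.

Lemma wsum_cv (G : nat -> Z -> R) L c n :
  (forall z, Un_cv (fun M => G M z) (L z)) -> Un_cv (fun M => wsum (G M) c n) (wsum L c n).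
Proof.
  intros H; induction n; cbn [wsum].
  - apply Un_cv_const.
  - apply CV_plus; auto.
Qed.

Section Young.
Variables (p q : Z -> R) (m s : R).
Hypothesis p_ge0 : forall z, 0 <= p z.
Hypothesis p_sum : Zsum_is p m.
Hypothesis q_sq_sum : Zsum_is (fun z => q z ^ 2) s.

Lemma wsum_conv_sq_le z c n :
  wsum (fun k => q k * p (z - k)%Z) c n ^ 2 <= m * wsum (fun k => q k ^ 2 * p (z - k)%Z) c n.
Proof.
  eapply Rle_trans; [apply (wsum_cauchy_schwarz q (fun k => p (z - k)%Z)); auto |].
  apply Rmult_le_compat_r.
  - apply wsum_ge0; intro k. apply Rmult_le_pos; [apply pow2_ge_0 | apply p_ge0].
  - rewrite wsum_reflect. now apply wsum_le_Zsum.
Qed.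

Lemma wsum_wsum_conv_sq_le c n c' n' :
  wsum (fun z => wsum (fun k => q k ^ 2 * p (z - k)%Z) c n) c' n' <= m * s.
Proof.
  rewrite (wsum_swap (fun z k => q k ^ 2 * p (z - k)%Z)).
  apply Rle_trans with (wsum (fun k => m * q k ^ 2) c n).
  - apply wsum_le; intro k. rewrite wsum_scal, wsum_shift, (Rmult_comm m).
    apply Rmult_le_compat_l; [apply pow2_ge_0 | now apply wsum_le_Zsum].
  - rewrite wsum_scal. apply Rmult_le_compat_l; [exact (Zsum_is_ge0 p m p_ge0 p_sum) |].
    apply wsum_le_Zsum; [intro; apply pow2_ge_0 | exact q_sq_sum].
Qed.

Lemma Zsum_conv_sq_le r s' :
  (forall z, Zsum_is (fun k => q k * p (z - k)%Z) (r z)) ->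
  Zsum_is (fun z => r z ^ 2) s' -> s' <= m ^ 2 * s.
Proof.
  intros Hr Hs'.
  set (g M z := sym_wsum (fun k => q k * p (z - k)%Z) M).
  apply (Un_cv_le_const (sym_wsum (fun z => r z ^ 2))); [intro N | now apply Zsum_is_cv].
  apply (Un_cv_le_const (fun M => sym_wsum (fun z => g M z ^ 2) N)).
  - intro M. unfold sym_wsum.
    apply Rle_trans with
      (m * wsum (fun z => wsum (fun k => q k ^ 2 * p (z - k)%Z) (- Z.of_nat M) (2 * M + 1))
                (- Z.of_nat N) (2 * N + 1)).
    + rewrite <- wsum_scal. apply wsum_le; intro z. apply wsum_conv_sq_le.
    + replace (m ^ 2 * s) with (m * (m * s)) by ring.
      apply Rmult_le_compat_l; [exact (Zsum_is_ge0 p m p_ge0 p_sum) |].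
      apply wsum_wsum_conv_sq_le.
  - apply wsum_cv; intro z. rewrite <- Rsqr_pow2.
    apply Un_cv_ext with (fun M => g M z * g M z); [intro; unfold Rsqr; ring |].
    apply CV_mult; apply Zsum_is_cv, Hr.
Qed.

End Young.

Lemma law_of_sum_0 p q : ~ law_of_sum p 0 q.
Proof. intro H; inversion H. Qed.

Lemma law_of_sum_unique p n q1 q2 : law_of_sum p n q1 -> law_of_sum p n q2 -> q1 = q2.
Proof.
  intros H1; revert q2; induction H1 as [| n q r Hq IH Hr]; intros q2 H2;
    inversion H2; subst; try solve [reflexivity | exfalso; eapply law_of_sum_0; eauto].
  match goal with H : law_of_sum p n ?q' |- _ => rewrite <- (IH _ H) in * end.
  apply functional_extensionality; intro z. eapply Zsum_is_unique; eauto.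
Qed.

Lemma law_of_sum_S p n q r : law_of_sum p n q -> law_of_sum p (S n) r ->
  forall z, Zsum_is (fun k => q k * p (z - k)%Z) (r z).
Proof.
  intros Hq Hr. inversion Hr; subst.
  - exfalso; eapply law_of_sum_0; eauto.
  - match goal with H : law_of_sum p n ?q' |- _ => rewrite (law_of_sum_unique p n q q') end;
      auto.
Qed.

Lemma law_of_sum_ge0 p n q : (forall z, 0 <= p z) -> law_of_sum p n q -> forall z, 0 <= q z.
Proof.
  intros Hp; induction 1 as [| n q r Hq IH Hr]; [exact Hp |].
  intro z. apply (wsum_le_Zsum (fun k => q k * p (z - k)%Z) _ 0 0); [| apply Hr].
  intro k. apply Rmult_le_pos; auto.
Qed.

(* If p j > 0 and q k > 0 then the convolution is positive at k + j. *)
Lemma law_of_sum_exists_pos p n q j : (forall z, 0 <= p z) -> 0 < p j ->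
  law_of_sum p n q -> exists z, 0 < q z.
Proof.
  intros Hp Hj; induction 1 as [| n q r Hq IH Hr]; [now exists j |].
  destruct IH as [k Hk]. exists (k + j)%Z.
  pose proof (law_of_sum_ge0 p n q Hp Hq) as Hq0.
  apply Rlt_le_trans with (q k * p j); [now apply Rmult_lt_0_compat |].
  replace (q k * p j) with (wsum (fun i => q i * p (k + j - i)%Z) k 1)
    by (rewrite wsum1; do 2 f_equal; lia).
  apply wsum_le_Zsum; [intro; apply Rmult_le_pos; auto | apply Hr].
Qed.

Lemma pmf_exists_pos p : is_pmf p -> exists j, 0 < p j.
Proof.
  intros [Hp H1]. apply NNPP; intro Hn.
  assert (Hp0 : forall z, p z = 0).
  { intro z. destruct (Hp z) as [Hlt |]; [exfalso; eauto | auto]. }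
  assert (Hcv0 : Un_cv (sym_wsum p) 0).
  { apply Un_cv_ext with (fun _ => 0); [| apply Un_cv_const].
    intro M. unfold sym_wsum. rewrite (wsum_ext p (fun _ => 0)); auto. symmetry; apply wsum_const0. }
  pose proof (UL_sequence _ _ _ (Zsum_is_cv p 1 H1) Hcv0). lra.
Qed.

Lemma Zsum_sq_pos f s z : 0 < f z -> Zsum_is (fun z => f z ^ 2) s -> 0 < s.
Proof.
  intros Hz Hs. apply Rlt_le_trans with (f z ^ 2); [now apply pow_lt |].
  rewrite <- (wsum1 (fun z => f z ^ 2)). apply wsum_le_Zsum; [intro; apply pow2_ge_0 | exact Hs].
Qed.

Theorem lemma5 (p : Z -> R) (hp : is_pmf p) (n : nat) (hn : (1 <= n)%nat)
  (q r : Z -> R) (hq : law_of_sum p n q) (hr : law_of_sum p (S n) r)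
  (h h' : R) (hh : H2_is q h) (hh' : H2_is r h') :
  h <= h'.
Proof.
  destruct hh as [s [Hs ->]], hh' as [s' [Hs' ->]].
  pose proof hp as [Hp Hp1]. destruct (pmf_exists_pos p hp) as [j Hj].
  assert (Hle : s' <= s).
  { replace s with (1 ^ 2 * s) by ring.
    exact (Zsum_conv_sq_le p q 1 s Hp Hp1 Hs r s' (law_of_sum_S p n q r hq hr) Hs'). }
  destruct (law_of_sum_exists_pos p (S n) r j Hp Hj hr) as [z Hz].
  assert (Hpos : 0 < s') by exact (Zsum_sq_pos r s' z Hz Hs').
  destruct Hle as [Hlt | ->]; [pose proof (ln_increasing _ _ Hpos Hlt) |]; lra.
Qed.
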